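(* Let $\theta_1<\theta_2$, $f\in C^2([\theta_1,\theta_2])$, $\gamma>1$, and let $I\subseteq[\theta_1,\theta_2]$ be a closed interval. Suppose that, for positive constants $A$ and $\alpha$ with $\alpha<2\gamma-2$, one of the following holds: $f(s)f''(s)\le -A(s-\theta_1)^\alpha$ for all $s\in I$; or $f(s)f''(s)\le -A(\theta_2-s)^\alpha$ for all $s\in I$. Then there is a constant $C>0$ depending only on $A,\alpha,\theta_1,\theta_2,\gamma$ such that $\int_I|f(s)|^{-1/\gamma}\,ds\le C$. *)

From HB Require Import structures.
From mathcomp Require Import all_boot all_order all_algebra.
From mathcomp Require Import all_classical all_reals all_analysis.
Set Implicit Arguments. Unset Strict Implicit. Unset Printing Implicit Defensive.
Import Order.TTheory GRing.Theory Num.Theory.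
Import numFieldNormedType.Exports.
Local Open Scope classical_set_scope.
Local Open Scope ring_scope.

Definition negpow_abs {R : realType} (gamma : R) (f : R -> R) (s : R) : \bar R :=
  if f s == 0 then +oo%E else ((`|f s|) `^ (- gamma^-1))%:E.

(* f is C^2 on [t1,t2]: f, f1, f2 continuous on the closed interval, and
   f' = f1, f1' = f2 on the open interval (so f1, f2 are the continuous
   extensions of the derivatives, i.e. the one-sided derivatives at endpoints). *)
Definition C2_on {R : realType} (t1 t2 : R) (f f1 f2 : R -> R) : Prop :=
  [/\ {within `[t1, t2], continuous f},
      {within `[t1, t2], continuous f1},
      {within `[t1, t2], continuous f2},
      (forall x, t1 < x < t2 -> is_derive x 1 f (f1 x)) &
      (forall x, t1 < x < t2 -> is_derive x 1 f1 (f2 x))].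

From HB Require Import structures.
From mathcomp Require Import all_boot all_order all_algebra.
From mathcomp Require Import all_classical all_reals all_analysis.
From mathcomp Require Import ring lra measurable_realfun.
Import Order.TTheory GRing.Theory Num.Theory.
Import numFieldNormedType.Exports.
Local Open Scope classical_set_scope.
Local Open Scope ring_scope.

(* On [a, b] the hypothesis forces f f'' < 0, so f does not vanish inside and,
   up to replacing f by -f, f >= 0 and f is concave.  Fix s and put
   D = min (s - a) (b - s).  Below its tangent at s, f stays in [0, f s] on an
   interval of length D next to s; on the half of it away from the degenerate
   endpoint the weight is at least (D/2)^alpha, so f'' <= - A (D/2)^alpha / f s
   there, and comparing f at the ends and at the midpoint of that half gives
   A (D/2)^(alpha+2) <= 8 f(s)^2.  Hence |f s|^(-1/gamma) <= M D^(-q) with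
   q = (alpha+2)/(2 gamma) < 1, which integrates over ]a, b[ to a bound that
   depends only on b - a <= t2 - t1. *)

Section real_analysis.
Context {R : realType}.
Implicit Types (f df : R -> R) (a b : R).

Lemma is_derive_continuous [f : R -> R] [x d : R] :
  is_derive x 1 f d -> {for x, continuous f}.
Proof. by case=> /derivable1_diffP /differentiable_continuous. Qed.

Lemma is_derive_powRBl [a : R] (p : R) [x : R] : a < x ->
  is_derive x 1 (fun y => (y - a) `^ p) (p * (x - a) `^ (p - 1)).
Proof.
move=> ax; rewrite -[X in is_derive _ _ _ X]mulr1.
apply: (is_derive1_comp (f := @powR R ^~ p) (g := shift (- a))).
  by apply: is_derive1_powR; rewrite /shift/= subr_gt0.
exact: is_derive_shift.
Qed.

Lemma is_derive_powRBr [b : R] (p : R) [x : R] : x < b ->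
  is_derive x 1 (fun y => (b - y) `^ p) (- (p * (b - x) `^ (p - 1))).
Proof.
move=> xb; rewrite -[X in is_derive _ _ _ X]mulrN1.
have -> : (fun y => (b - y) `^ p) = (@powR R ^~ p) \o (cst b - id).
  by apply/funext => y; rewrite /= !fctE.
apply: is_derive1_comp.
  by apply: is_derive1_powR; rewrite /= subr_gt0.
by apply: is_derive_eq; rewrite sub0r.
Qed.

Lemma le0_is_derive_nonincr f df a b :
  (forall x, a < x < b -> is_derive x 1 f (df x)) ->
  (forall x, a < x < b -> df x <= 0) ->
  {within `[a, b], continuous f} ->
  {in `[a, b] &, {homo f : x y /~ x <= y}}.
Proof.
move=> d dle; apply: ler0_derive1_le_cc => x /[!in_itv]/= axb.
  by case: (d x axb).
by rewrite derive1E; case: (d x axb) => _ ->; exact: dle.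
Qed.

Lemma ge0_is_derive_ndecr f df a b :
  (forall x, a < x < b -> is_derive x 1 f (df x)) ->
  (forall x, a < x < b -> 0 <= df x) ->
  {within `[a, b], continuous f} ->
  {in `[a, b] &, {homo f : x y / x <= y}}.
Proof.
move=> d dge; apply: ger0_derive1_le_cc => x /[!in_itv]/= axb.
  by case: (d x axb).
by rewrite derive1E; case: (d x axb) => _ ->; exact: dge.
Qed.

Lemma continuous_nonzero_sign [f : R -> R] [a b : R] : {within `[a, b], continuous f} ->
  (forall y, a < y < b -> f y != 0) ->
  (forall y, a <= y <= b -> 0 <= f y) \/ (forall y, a <= y <= b -> f y <= 0).
Proof.
move=> cf nz.
have no_sign_change x y : a <= x -> x <= y -> y <= b -> 0 <= f x * f y.
  move=> ax xy yb; rewrite leNgt; apply/negP => fxy.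
  have [c /[!in_itv]/= /andP[xc cy] fc0] : exists2 c, c \in `[x, y] & f c = 0.
    apply: IVT => //.
      by apply: continuous_subspaceW cf; apply: subset_itv; rewrite bnd_simp.
    have [fx|fx] := ltrP (f x) 0.
    - have fy : 0 < f y by nra.
      by rewrite ge_min !le_max (ltW fx) (ltW fy) orbT.
    - have fy : f y < 0 by nra.
      by rewrite ge_min !le_max fx (ltW fy) orbT.
  have xc' : x < c.
    by rewrite lt_neqAle xc andbT; apply: contraTneq fxy => ->; rewrite fc0 mul0r ltxx.
  have cy' : c < y.
    by rewrite lt_neqAle cy andbT; apply: contraTneq fxy => <-; rewrite fc0 mulr0 ltxx.
  have /nz : a < c < b by apply/andP; split; lra.
  by rewrite fc0 eqxx.
have [fge0|/existsNP[y0 /not_implyP[ay0b /negP]]] :=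
  pselect (forall y, a <= y <= b -> 0 <= f y); [by left | rewrite -ltNge => fy0].
right => y ayb; rewrite leNgt; apply/negP => fy.
have /andP[ay yb] := ayb; have /andP[ay0 y0b] := ay0b.
have [yy0|y0y] := lerP y y0.
- by have := no_sign_change y y0 ay yy0 y0b; nra.
- by have := no_sign_change y0 y ay0 (ltW y0y) yb; nra.
Qed.

Lemma integral_itv_cc_is_derive [g G : R -> R] [u v : R] : u < v ->
  {within `[u, v], continuous g} ->
  (forall x, u <= x <= v -> is_derive x 1 G (g x)) ->
  (\int[lebesgue_measure]_(x in `[u, v]) (g x)%:E = (G v - G u)%:E)%E.
Proof.
move=> uv cg dG; rewrite EFinB; apply: continuous_FTC2 => //.
- split.
  + by move=> x /[!in_itv]/= /andP[ux xv]; case: (dG x) => //; rewrite !ltW.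
  + apply: cvg_at_right_filter; apply: (is_derive_continuous (dG u _)).
    by rewrite lexx ltW.
  + apply: cvg_at_left_filter; apply: (is_derive_continuous (dG v _)).
    by rewrite lexx ltW.
- move=> x /[!in_itv]/= /andP[ux xv]; rewrite derive1E.
  by case: (dG x) => [|_ ->//]; rewrite !ltW.
Qed.

Lemma itv_oo_bigcup_cc [a b : R] : a < b ->
  `]a, b[%classic = \bigcup_n `[a + (b - a) / n.+3%:R, b - (b - a) / n.+3%:R]%classic.
Proof.
move=> ab; have e_gt0 n : 0 < (b - a) / n.+3%:R by rewrite divr_gt0 ?subr_gt0.
apply/seteqP; split => x /=.
- rewrite in_itv/= => /andP[ax xb].
  set d : R := Num.min (x - a) (b - x).
  have [d1 d2] : d <= x - a /\ d <= b - x by split; rewrite ge_min lexx ?orbT.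
  have d0 : 0 < d by rewrite lt_min !subr_gt0 ax xb.
  exists (Num.truncn ((b - a) / d)) => //=.
  have : (b - a) / d < (Num.truncn ((b - a) / d)).+3%:R.
    by apply: lt_le_trans (truncnS_gt _) _; rewrite ler_nat; do 2 apply: leqW.
  rewrite ltr_pdivrMr // mulrC -ltr_pdivrMr ?ltr0n // => en.
  move: en; set e := (b - a) / (_.+3)%:R => en; clearbody e.
  by rewrite in_itv/=; apply/andP; split; lra.
- move=> [n _] /=; rewrite !in_itv/= => /andP[h1 h2].
  move: (e_gt0 n) h1 h2; set e := (b - a) / _ => e0 h1 h2; clearbody e.
  by apply/andP; split; lra.
Qed.

Lemma ge0_integral_itv_oo_le (g G : R -> R) (a b K : R) : a < b ->
  {in `]a, b[, continuous g} -> (forall x, a < x < b -> 0 <= g x) ->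
  (forall x, a < x < b -> is_derive x 1 G (g x)) ->
  (forall u v, a < u -> u < v -> v < b -> G v - G u <= K) ->
  (\int[lebesgue_measure]_(x in `]a, b[) (g x)%:E <= K%:E)%E.
Proof.
move=> ab cg g0 dG GK.
(* exhaust ]a, b[ by compact intervals, where the FTC applies *)
pose e n : R := (b - a) / n.+3%:R.
pose F n : set R := `[a + e n, b - e n]%classic.
have e_gt0 n : 0 < e n by rewrite divr_gt0 ?subr_gt0.
have e2_lt n : e n * 2 < b - a.
  rewrite /e mulrAC ltr_pdivrMr ?ltr0n // -subr_gt0 -mulrBr.
  by rewrite mulr_gt0 ?subr_gt0 // ltr_nat.
have F_sub n x : F n x -> a < x < b.
  by rewrite /F/= in_itv/= => /andP[? ?]; have := e_gt0 n => ?; apply/andP; split; lra.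
have F_nd : nondecreasing_seq F.
  move=> n m nm; rewrite subsetEset => x; rewrite /F/= !in_itv/=.
  have : e m <= e n by rewrite ler_pM2l ?subr_gt0 // lef_pV2 ?posrE ?ltr0n // ler_nat.
  by move=> emn /andP[? ?]; apply/andP; split; lra.
have mF n : measurable (F n) by exact: measurable_itv.
have cgF n : {within F n, continuous g}.
  by apply: continuous_in_subspaceT => x /[1!inE] /F_sub axb; apply: cg; rewrite in_itv.
have mg n : measurable_fun (F n) (EFin \o g).
  by apply/measurable_EFinP; exact: subspace_continuous_measurable_fun (mF n) (cgF n).
have g0F n x : F n x -> (0 <= (g x)%:E)%E by move=> /F_sub /g0; rewrite lee_fin.
have cvgI :=
  ge0_nondecreasing_set_cvg_integral (mu := @lebesgue_measure R) F_nd mF mg g0F.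
rewrite (itv_oo_bigcup_cc ab) -(cvg_lim _ cvgI) //.
apply: lime_le; first by apply/cvg_ex; eexists; exact: cvgI.
apply: nearW => n; have := e_gt0 n; have := e2_lt n => ? ?.
have dGn x : a + e n <= x <= b - e n -> is_derive x 1 G (g x).
  by move=> ?; apply/dG/(F_sub n); rewrite /F/= in_itv.
rewrite (integral_itv_cc_is_derive _ (cgF n) dGn) ?lee_fin; last lra.
by apply: GK; lra.
Qed.

Lemma integral_itv_oo_powR_le (a b q : R) : a < b -> 0 < q < 1 ->
  (\int[lebesgue_measure]_(x in `]a, b[) ((x - a) `^ (- q) + (b - x) `^ (- q))%:E
     <= (2 * (b - a) `^ (1 - q) / (1 - q))%:E)%E.
Proof.
move=> ab /andP[q0 q1].
pose G x := ((x - a) `^ (1 - q) - (b - x) `^ (1 - q)) / (1 - q).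
apply: (@ge0_integral_itv_oo_le _ G) => //.
- move=> x /[!in_itv]/= /andP[ax xb].
  have := is_derive_powRBl (- q) ax; have := is_derive_powRBr (- q) xb => ? ?.
  by apply: (@is_derive_continuous _ _ _ _); exact: _.
- by move=> x _; rewrite addr_ge0 ?powR_ge0.
- move=> x /andP[ax xb].
  have := is_derive_powRBl (1 - q) ax; have := is_derive_powRBr (1 - q) xb => ? ?.
  apply: is_derive_eq; rewrite (_ : 1 - q - 1 = - q); last lra.
  by rewrite /GRing.scale/=; field; lra.
- move=> u v au uv vb; rewrite -mulrBl ler_pM2r ?invr_gt0 ?subr_gt0 //.
  have le_ba x : 0 <= x <= b - a -> x `^ (1 - q) <= (b - a) `^ (1 - q).
    by case/andP=> x0 xba; rewrite ge0_ler_powR // ?nnegrE; lra.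
  have := le_ba (v - a) ltac:(apply/andP; split; lra).
  have := le_ba (b - u) ltac:(apply/andP; split; lra).
  have := powR_ge0 (b - v) (1 - q); have := powR_ge0 (u - a) (1 - q).
  lra.
Qed.

Lemma powR_min_le_add (x y p : R) : (Num.min x y) `^ p <= x `^ p + y `^ p.
Proof.
by have [_|_] := leP x y; rewrite ?min_l ?min_r ?lerDl ?lerDr ?powR_ge0 // ltW.
Qed.

Lemma negpowR_le_of_sqr_ge (x d A al g : R) : 0 < x -> 0 < d -> 0 < A -> 0 < g ->
  A * d `^ (al + 2) <= 8 * x ^+ 2 ->
  x `^ (- g^-1) <= (A / 8) `^ (- (2 * g)^-1) * d `^ (- ((al + 2) / (2 * g))).
Proof.
move=> x0 d0 A0 g0 H.
have r0 : 0 <= (2 * g)^-1 by rewrite invr_ge0; lra.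
have : (A / 8 * d `^ (al + 2)) `^ (2 * g)^-1 <= (x ^+ 2) `^ (2 * g)^-1.
  by rewrite ge0_ler_powR // ?nnegrE ?mulr_ge0 ?powR_ge0 ?sqr_ge0 //; lra.
rewrite powRM ?powR_ge0 -?powRrM //; last lra.
rewrite -(powR_mulrn 2 (ltW x0)) -powRrM (_ : 2%:R * (2 * g)^-1 = g^-1).
  by rewrite !powRN -invfM lef_pV2 // posrE ?mulr_gt0 ?powR_gt0 //; lra.
by field; lra.
Qed.

End real_analysis.

Section weighted_concavity.
Context {R : realType}.

Definition weighted_concave (A al a b : R) (f f2 : R -> R) :=
  (forall y, a < y < b -> f y * f2 y <= - (A * (y - a) `^ al)) \/
  (forall y, a < y < b -> f y * f2 y <= - (A * (b - y) `^ al)).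

Lemma weighted_concave_mul_lt0 [A al a b : R] [f f2 : R -> R] :
  0 < A -> weighted_concave A al a b f f2 -> forall y, a < y < b -> f y * f2 y < 0.
Proof.
move=> A0 wc y /[dup] /andP[ay yb] ayb.
have wpos t : 0 < t -> - (A * t `^ al) < 0.
  by move=> t0; rewrite oppr_lt0 mulr_gt0 ?powR_gt0.
by case: wc => /(_ y ayb) le; apply: le_lt_trans le (wpos _ _); rewrite subr_gt0.
Qed.

Lemma weighted_concaveN [A al a b : R] [f f2 : R -> R] :
  weighted_concave A al a b f f2 ->
  weighted_concave A al a b (fun y => - f y) (fun y => - f2 y).
Proof. by case=> H; [left|right] => y /H; rewrite mulrNN. Qed.

Lemma weighted_concave_subitv [A al t1 t2 a b : R] [f f2 : R -> R] : 0 < A -> 0 <= al ->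
  t1 <= a -> b <= t2 ->
  (forall s, a <= s <= b -> f s * f2 s <= - (A * (s - t1) `^ al)) \/
  (forall s, a <= s <= b -> f s * f2 s <= - (A * (t2 - s) `^ al)) ->
  weighted_concave A al a b f f2.
Proof.
move=> A0 al0 t1a bt2 H.
have le_weight x y : 0 <= x -> x <= y -> - (A * y `^ al) <= - (A * x `^ al).
  by move=> x0 xy; rewrite lerN2 ler_pM2l // ge0_ler_powR ?nnegrE //; lra.
by case: H => H; [left|right] => y /andP[ay yb];
  (apply: le_trans (H y _) (le_weight _ _ _ _); [apply/andP; split|..]; lra).
Qed.

End weighted_concavity.

Section concave_bounds.
Context {R : realType}.
Context {f f1 f2 : R -> R} {a b : R}.
Hypothesis cf : {within `[a, b], continuous f}.
Hypothesis df : forall y, a < y < b -> is_derive y 1 f (f1 y).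
Hypothesis df1 : forall y, a < y < b -> is_derive y 1 f1 (f2 y).

Lemma deriv2_le_deriv_nonincr u v K y z : a <= u -> v <= b ->
  (forall t, u < t < v -> f2 t <= - K) -> u < y -> y <= z -> z < v ->
  f1 z + K * z <= f1 y + K * y.
Proof.
move=> au vb f2K uy yz zv; pose phi t := f1 t + K * t.
have dphi t : y <= t <= z -> is_derive t 1 phi (f2 t + K).
  move=> /andP[yt tz]; have /df1 ? : a < t < b by apply/andP; split; lra.
  by apply: is_derive_eq; rewrite /GRing.scale/=; lra.
apply: (@le0_is_derive_nonincr _ phi (fun t => f2 t + K) y z);
  rewrite ?in_itv/= ?lexx ?yz//.
- by move=> t /andP[yt tz]; apply: dphi; apply/andP; split; lra.
- by move=> t /andP[yt tz]; have := f2K t ltac:(apply/andP; split; lra); lra.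
- apply: continuous_in_subspaceT => t; rewrite inE/= in_itv/= => ytz.
  exact: is_derive_continuous (dphi t ytz).
Qed.

Lemma deriv2_le_taylor u v K s x : a <= u -> v <= b ->
  (forall y, u < y < v -> f2 y <= - K) -> u < s < v -> u <= x <= v ->
  f x <= f s + f1 s * (x - s) - K / 2 * (x - s) ^+ 2.
Proof.
move=> au vb f2K /andP[us sv] /andP[ux xv].
pose phi y := f1 y + K * y.
have phi_nincr y z : u < y -> y <= z -> z < v -> phi z <= phi y.
  exact: deriv2_le_deriv_nonincr au vb f2K.
(* h' = phi - phi s changes sign from + to - at s, so h is maximal at s. *)
pose h y := f y - f1 s * y + K / 2 * (y - s) ^+ 2.
have dh t : u < t < v -> is_derive t 1 h (phi t - phi s).
  move=> /andP[ut tv]; have /df ? : a < t < b by apply/andP; split; lra.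
  by apply: is_derive_eq; rewrite /phi /GRing.scale/=; lra.
have ch : {within `[u, v], continuous h}.
  have cP : continuous (fun t => - (f1 s * t) + K / 2 * (t - s) ^+ 2).
    by move=> t; apply: (@is_derive_continuous _ _ t _); exact: _.
  have -> : h = f + (fun t => - (f1 s * t) + K / 2 * (t - s) ^+ 2).
    by apply/funext => t; rewrite /h !fctE addrA.
  have cfuv : {within `[u, v], continuous f}.
    by apply: continuous_subspaceW cf; apply: subset_itv; rewrite bnd_simp.
  by move=> t; apply: continuousD; [exact: cfuv | exact: continuous_subspaceT].
have hsub y z : u <= y -> z <= v -> {within `[y, z], continuous h}.
  by move=> uy zv; apply: continuous_subspaceW ch; apply: subset_itv; rewrite bnd_simp.
suff : h x <= h s by rewrite /h subrr expr0n/=; lra.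
have [sx|xs] := leP s x.
- apply: (@le0_is_derive_nonincr _ h (fun t => phi t - phi s) s x _ _ _ x s);
    rewrite ?in_itv/= ?lexx ?sx//.
  + by move=> t /andP[st tx]; apply: dh; apply/andP; split; lra.
  + by move=> t /andP[st tx]; rewrite subr_le0; apply: phi_nincr; lra.
  + by apply: hsub; lra.
- apply: (@ge0_is_derive_ndecr _ h (fun t => phi t - phi s) x s _ _ _ x s);
    rewrite ?in_itv/= ?lexx ?(ltW xs)//.
  + by move=> t /andP[xt ts]; apply: dh; apply/andP; split; lra.
  + by move=> t /andP[xt ts]; rewrite subr_ge0; apply: phi_nincr; lra.
  + by apply: hsub; lra.
Qed.

Lemma width_sqr_le_of_mul_deriv2_le p q e c : a <= p -> p < q -> q <= b -> 0 < c ->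
  (forall y, p <= y <= q -> 0 <= f y <= e) ->
  (forall y, p < y < q -> f y * f2 y <= - c) ->
  c * (q - p) ^+ 2 <= 8 * e ^+ 2.
Proof.
move=> ap pq qb c0 fe ff2.
have fe_oo y : p < y < q -> 0 <= f y <= e.
  by case/andP=> ? ?; apply: fe; apply/andP; split; lra.
have f_gt0 y : p < y < q -> 0 < f y.
  move=> pyq; have /andP[fy0 _] := fe_oo y pyq; rewrite lt_def fy0 andbT.
  by apply/eqP => fy; have := ff2 y pyq; rewrite fy mul0r; lra.
pose m := (p + q) / 2.
have pmq : p < m < q by apply/andP; split; rewrite /m; lra.
have e0 : 0 < e by have := f_gt0 m pmq; have := fe_oo m pmq; lra.
have f2_le y : p < y < q -> f2 y <= - (c / e).
  move=> pyq; have := ff2 y pyq; have := f_gt0 y pyq; have := fe_oo y pyq.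
  rewrite -mulNr ler_pdivlMr //; nra.
(* add the Taylor bounds from the midpoint m at p and at q *)
have /andP[fp0 _] := fe p ltac:(apply/andP; split; lra).
have /andP[fq0 _] := fe q ltac:(apply/andP; split; lra).
have /andP[_ fme] := fe_oo m pmq.
have Hp := @deriv2_le_taylor p q _ m p ap qb f2_le pmq ltac:(by rewrite lexx (ltW pq)).
have Hq := @deriv2_le_taylor p q _ m q ap qb f2_le pmq ltac:(by rewrite lexx (ltW pq)).
have : c / e * (q - p) ^+ 2 <= 8 * e by move: Hp Hq; rewrite /m; nra.
by rewrite -(ler_pM2r e0) mulrAC divfK ?gt_eqF// -mulrA -expr2.
Qed.

Lemma ge0_concave_sublevel_itv (s D : R) :
  (forall y, a <= y <= b -> 0 <= f y) -> (forall y, a < y < b -> f2 y <= 0) ->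
  a < s < b -> D <= s - a -> D <= b - s ->
  exists l, [/\ a <= l, l + D <= b & forall y, l <= y <= l + D -> 0 <= f y <= f s].
Proof.
move=> f0 f2le0 sab Ds Ds'.
(* f lies below its tangent at s: go where the tangent does not increase *)
have below y : a <= y <= b -> f1 s * (y - s) <= 0 -> 0 <= f y <= f s.
  have f2le : forall t, a < t < b -> f2 t <= - 0 by move=> t /f2le0; rewrite oppr0.
  move=> ayb; rewrite f0 //=.
  have := @deriv2_le_taylor a b 0 s y (lexx a) (lexx b) f2le sab ayb.
  by rewrite !mul0r subr0; lra.
have [f1s_ge0|f1s_lt0] := leP 0 (f1 s).
- exists (s - D); split; [lra|lra|] => y /andP[ly yl].
  by apply: below; [apply/andP; split; lra | apply: mulr_ge0_le0; lra].
- exists s; split; [lra|lra|] => y /andP[ly yl].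
  by apply: below; [apply/andP; split; lra | apply: mulr_le0_ge0; lra].
Qed.

Lemma weighted_concave_sqr_ge [A al s : R] : 0 < A -> 0 <= al ->
  (forall y, a <= y <= b -> 0 <= f y) -> weighted_concave A al a b f f2 -> a < s < b ->
  A * (Num.min (s - a) (b - s) / 2) `^ (al + 2) <= 8 * f s ^+ 2.
Proof.
move=> A0 al0 f0 wc /andP[as_ sb].
set D := Num.min (s - a) (b - s).
have [Ds Ds'] : D <= s - a /\ D <= b - s by split; rewrite ge_min lexx ?orbT.
have D0 : 0 < D by rewrite lt_min !subr_gt0 as_ sb.
have f2_le0 y : a < y < b -> f2 y <= 0.
  move=> /[dup] /andP[ay yb] /(weighted_concave_mul_lt0 A0 wc) ff2.
  have fy0 : 0 <= f y by apply: f0; apply/andP; split; lra.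
  by rewrite leNgt; apply/negP => f2y; nra.
have [l [a_l l_b fle]] :=
  @ge0_concave_sublevel_itv s D f0 f2_le0 ltac:(by rewrite as_ sb) Ds Ds'.
have width p : l <= p -> p + D / 2 <= l + D ->
    (forall y, p < y < p + D / 2 -> f y * f2 y <= - (A * (D / 2) `^ al)) ->
    A * (D / 2) `^ (al + 2) <= 8 * f s ^+ 2.
  move=> lp pl ff2.
  have -> : A * (D / 2) `^ (al + 2) = A * (D / 2) `^ al * (D / 2) ^+ 2.
    rewrite powRD ?(powR_mulrn 2) ?mulrA //; first lra.
    by apply/implyP => _; rewrite gt_eqF //; lra.
  have := @width_sqr_le_of_mul_deriv2_le p (p + D / 2) (f s) (A * (D / 2) `^ al).
  rewrite addrAC subrr add0r.
  apply; [lra|lra|lra|by rewrite mulr_gt0 ?powR_gt0; lra| |exact: ff2].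
  by move=> y /andP[py yp]; apply: fle; apply/andP; split; lra.
have powR_le x y : 0 <= x -> x <= y -> x `^ al <= y `^ al.
  by move=> x0 xy; rewrite ge0_ler_powR // nnegrE; lra.
(* use the half of [l, l + D] away from the endpoint where the weight vanishes *)
case: wc => wc.
- apply: (width (l + D / 2)); [lra|lra|] => y /andP[py yp].
  apply: le_trans (wc y _) _; first by apply/andP; split; lra.
  by rewrite lerN2 ler_pM2l // powR_le; lra.
- apply: (width l); [lra|lra|] => y /andP[py yp].
  apply: le_trans (wc y _) _; first by apply/andP; split; lra.
  by rewrite lerN2 ler_pM2l // powR_le; lra.
Qed.

End concave_bounds.

Section negpow_integral.
Context {R : realType}.

Lemma C2_on_subitv [t1 t2 a b : R] [f f1 f2 : R -> R] : t1 <= a -> b <= t2 ->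
  C2_on t1 t2 f f1 f2 -> C2_on a b f f1 f2.
Proof.
move=> t1a bt2 [cf cf1 cf2 df df1].
have sub : `[a, b] `<=` `[t1, t2] by apply: subset_itv; rewrite bnd_simp.
split; try exact: continuous_subspaceW sub _.
- by move=> x /andP[ax xb]; apply: df; apply/andP; split; lra.
- by move=> x /andP[ax xb]; apply: df1; apply/andP; split; lra.
Qed.

Lemma measurable_negpow_abs (gamma : R) (f : R -> R) (a b : R) :
  {within `[a, b], continuous f} -> measurable_fun `]a, b[ (negpow_abs gamma f).
Proof.
move=> cf; pose phi (y : R) := if y == 0 then +oo%E else (`|y| `^ (- gamma^-1))%:E.
have -> : negpow_abs gamma f = phi \o f by [].
apply: measurableT_comp; last first.
  apply: subspace_continuous_measurable_fun; first exact: measurable_itv.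
  by apply: continuous_subspaceW cf; exact: subset_itv_oo_cc.
apply: measurable_fun_ifT; [|exact: measurable_cst|].
- apply: (measurable_fun_bool true); rewrite (_ : _ @^-1` _ = [set 0]) ?setTI //.
  by apply/seteqP; split => [_ /eqP ->|_ -> /=]; rewrite ?eqxx.
- apply/measurable_EFinP.
  apply: (@measurableT_comp _ _ _ _ _ _ (@powR R ^~ (- gamma^-1)) _ (@Num.norm _ R)).
  + exact: measurable_powR.
  + exact: normr_measurable.
Qed.

Lemma negpow_abs_le_weighted [gamma A al a b : R] [f f1 f2 : R -> R] [s : R] :
  {within `[a, b], continuous f} ->
  (forall y, a < y < b -> is_derive y 1 f (f1 y)) ->
  (forall y, a < y < b -> is_derive y 1 f1 (f2 y)) ->
  0 < A -> 0 <= al -> 0 < gamma -> weighted_concave A al a b f f2 -> a < s < b ->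
  (negpow_abs gamma f s <= ((A / 8) `^ (- (2 * gamma)^-1) *
     (Num.min (s - a) (b - s) / 2) `^ (- ((al + 2) / (2 * gamma))))%:E)%E.
Proof.
move=> cf df df1 A0 al0 g0 wc sab.
have nz y : a < y < b -> f y != 0.
  move=> /(weighted_concave_mul_lt0 A0 wc).
  by apply: contraTneq => ->; rewrite mul0r ltxx.
have key : A * (Num.min (s - a) (b - s) / 2) `^ (al + 2) <= 8 * `|f s| ^+ 2.
  rewrite real_normK ?num_real //.
  have [f_ge0|f_le0] := continuous_nonzero_sign cf nz.
    exact (weighted_concave_sqr_ge cf df df1 A0 al0 f_ge0 wc sab).
  rewrite -sqrrN; apply: (weighted_concave_sqr_ge (f := fun y => - f y)
    (f1 := fun y => - f1 y) (f2 := fun y => - f2 y)) => //.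
  - by move=> y; apply: continuousN; apply: cf.
  - by move=> y /df ?; apply: is_deriveN.
  - by move=> y /df1 ?; apply: is_deriveN.
  - by move=> y /f_le0; rewrite oppr_ge0.
  - exact: weighted_concaveN.
rewrite /negpow_abs (negbTE (nz s sab)) lee_fin.
apply: negpowR_le_of_sqr_ge key => //; first by rewrite normr_gt0 nz.
by case/andP: sab => ? ?; rewrite divr_gt0 // lt_min !subr_gt0; apply/andP.
Qed.

Definition negpow_integral_bound (gamma A al L : R) : R :=
  let q := (al + 2) / (2 * gamma) in
  (A / 8) `^ (- (2 * gamma)^-1) * 2 `^ q * (2 * L `^ (1 - q) / (1 - q)).

Lemma negpow_integral_bound_gt0 (gamma A al L : R) : 0 < A -> 0 < gamma ->
  al + 2 < 2 * gamma -> 0 < L -> 0 < negpow_integral_bound gamma A al L.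
Proof.
move=> A0 g0 alg L0; have q_lt1 : (al + 2) / (2 * gamma) < 1 by rewrite ltr_pdivrMr; lra.
by rewrite !mulr_gt0 ?invr_gt0 ?powR_gt0 ?subr_gt0 //; lra.
Qed.

Lemma ler_negpow_integral_bound (gamma A al L L' : R) : 0 < gamma ->
  al + 2 < 2 * gamma -> 0 <= L -> L <= L' ->
  negpow_integral_bound gamma A al L <= negpow_integral_bound gamma A al L'.
Proof.
move=> g0 alg L0 LL'; have q_lt1 : (al + 2) / (2 * gamma) < 1 by rewrite ltr_pdivrMr; lra.
rewrite /negpow_integral_bound; apply: ler_wpM2l; first by rewrite mulr_ge0 ?powR_ge0.
apply: ler_wpM2r; first by rewrite invr_ge0 subr_ge0 ltW.
by apply: ler_wpM2l => //; apply: ge0_ler_powR; rewrite ?nnegrE; lra.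
Qed.

Lemma integral_negpow_abs_le [gamma A al a b : R] [f f1 f2 : R -> R] :
  {within `[a, b], continuous f} ->
  (forall y, a < y < b -> is_derive y 1 f (f1 y)) ->
  (forall y, a < y < b -> is_derive y 1 f1 (f2 y)) ->
  0 < A -> 0 <= al -> 0 < gamma -> al + 2 < 2 * gamma -> weighted_concave A al a b f f2 ->
  (\int[lebesgue_measure]_(s in `[a, b]) negpow_abs gamma f s
     <= (negpow_integral_bound gamma A al (b - a))%:E)%E.
Proof.
move=> cf df df1 A0 al0 g0 alg wc.
rewrite /negpow_integral_bound; set q := (al + 2) / (2 * gamma).
set M := (A / 8) `^ (- (2 * gamma)^-1) * 2 `^ q.
have q_gt0 : 0 < q by rewrite divr_gt0 //; lra.
have q_lt1 : q < 1 by rewrite ltr_pdivrMr; lra.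
have M_gt0 : 0 < M by rewrite mulr_gt0 ?powR_gt0 //; lra.
rewrite integral_itv_bndoo; last exact: measurable_negpow_abs.
have [ab|ba] := ltrP a b; last first.
  rewrite set_itv_ge ?integral_set0 -?leNgt // lee_fin.
  by rewrite mulr_ge0 ?divr_ge0 ?mulr_ge0 ?powR_ge0 ?(ltW M_gt0) //; lra.
have pointwise s : a < s < b ->
    (negpow_abs gamma f s <= (M * ((s - a) `^ (- q) + (b - s) `^ (- q)))%:E)%E.
  move=> sab; apply: le_trans (negpow_abs_le_weighted cf df df1 A0 al0 g0 wc sab) _.
  rewrite lee_fin /M -mulrA ler_wpM2l ?powR_ge0 //.
  have min_ge0 : 0 <= Num.min (s - a) (b - s).
    by case/andP: sab => ? ?; rewrite le_min !subr_ge0 !ltW.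
  rewrite powRM ?invr_ge0 // mulrC -(@powR_inv1 _ 2) ?ler0n // -powRrM mulN1r opprK -/q.
  by apply: ler_wpM2l; [exact: powR_ge0 | exact: powR_min_le_add].
clearbody M; pose g x := (x - a) `^ (- q) + (b - x) `^ (- q).
have mg : measurable_fun `]a, b[ g.
  apply: open_continuous_measurable_fun; first exact: interval_open.
  move=> x; rewrite inE/= in_itv/= => /andP[ax xb].
  have := is_derive_powRBl (- q) ax; have := is_derive_powRBr (- q) xb => ? ?.
  by apply: (@is_derive_continuous _ _ _ _); exact: _.
apply: le_trans.
  apply: (@ge0_le_integral _ _ _ lebesgue_measure _ (measurable_itv _) _
    (fun x => (M * g x)%:E)).
  - by move=> x _; rewrite /negpow_abs; case: ifP; rewrite ?lee_fin ?powR_ge0.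
  - exact: measurable_negpow_abs.
  - by apply/measurable_EFinP; apply: measurable_funM => //; exact: measurable_cst.
  - by move=> x /=; rewrite in_itv/= => /pointwise.
under eq_integral do rewrite EFinM.
rewrite ge0_integralZl_EFin ?(ltW M_gt0) //; last 2 first.
- by move=> x _; rewrite lee_fin addr_ge0 ?powR_ge0.
- exact/measurable_EFinP.
rewrite EFinM; apply: lee_wpmul2l; first by rewrite lee_fin ltW.
by apply: integral_itv_oo_powR_le; rewrite ?q_gt0.
Qed.

End negpow_integral.

Theorem lemma3p7 (R : realType) (t1 t2 gamma A alpha : R) :
  t1 < t2 -> 1 < gamma -> 0 < A -> 0 < alpha -> alpha < 2 * gamma - 2 ->
  exists C : R, 0 < C /\
    forall (f f1 f2 : R -> R) (a b : R),
      C2_on t1 t2 f f1 f2 ->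
      t1 <= a -> a <= b -> b <= t2 ->
      ((forall s, a <= s <= b -> f s * f2 s <= - (A * (s - t1) `^ alpha)) \/
       (forall s, a <= s <= b -> f s * f2 s <= - (A * (t2 - s) `^ alpha))) ->
      (\int[lebesgue_measure]_(s in `[a, b]) negpow_abs gamma f s <= C%:E)%E.
Proof.
move=> t12 g1 A0 al0 alg.
have g0 : 0 < gamma by lra.
have alg' : alpha + 2 < 2 * gamma by lra.
exists (negpow_integral_bound gamma A alpha (t2 - t1)).
split; first by apply: negpow_integral_bound_gt0 => //; lra.
move=> f f1 f2 a b C2f t1a ab bt2 wt.
have [cf _ _ df df1] := C2_on_subitv t1a bt2 C2f.
have wc := weighted_concave_subitv A0 (ltW al0) t1a bt2 wt.
apply: le_trans (integral_negpow_abs_le cf df df1 A0 (ltW al0) g0 alg' wc) _.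
by rewrite lee_fin ler_negpow_integral_bound //; lra.
Qed.
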